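(* Let $\ket\psi$ be the output state of a $t$-doped Clifford circuit on $n$ qubits. Then the stabilizer dimension of $\ket\psi$ is at least $n-2t$.
   Context: A $t$-doped Clifford circuit starts in $\ket{0^n}$ and consists of Clifford gates (Hadamard, Phase, CNOT) and at most $t$ single-qubit non-Clifford gates. For $x=(a,b)\in\mathbb F_2^{2n}$, $W_x = i^{a\cdot b}X^{a_1}Z^{b_1}\otimes\cdots\otimes X^{a_n}Z^{b_n}$ ($a\cdot b$ over the integers). $\mathrm{Weyl}(\ket\psi)=\{x\in\mathbb F_2^{2n}:W_x\ket\psi=\pm\ket\psi\}$ is a subspace of $\mathbb F_2^{2n}$, and the stabilizer dimension of $\ket\psi$ is its dimension. *)

From HB Require Import structures.
From mathcomp Require Import all_boot all_order all_algebra.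
Set Implicit Arguments. Unset Strict Implicit. Unset Printing Implicit Defensive.
Import Order.TTheory GRing.Theory Num.Theory.
Local Open Scope ring_scope.

Section QC.
(* Amplitudes live in an arbitrary numeric algebraically closed field C
   (e.g. the complex numbers), with conjugation ^* and imaginary unit 'i. *)
Variable C : numClosedFieldType.
Variable n : nat.

Notation basis := {ffun 'I_n -> bool}.
(* a (not necessarily normalized) n-qubit state vector *)
Notation state := {ffun basis -> C}.

Definition b2o (b : bool) : 'I_2 := if b then ord_max else ord0.
Definition upd (x : basis) (j : 'I_n) (b : bool) : basis :=
  [ffun i => if i == j then b else x i].

Definition ket0 : state := [ffun x : basis => if x == [ffun => false] then 1 else 0].

(* apply a single-qubit operator U : 'M_2 to qubit j:
   U |c> = sum_r U r c |r>, tensored with the identity on the other qubits *)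
Definition apply1 (U : 'M[C]_2) (j : 'I_n) (psi : state) : state :=
  [ffun x : basis => \sum_(c : bool) U (b2o (x j)) (b2o c) * psi (upd x j c)].

Definition apply_cnot (j k : 'I_n) (psi : state) : state :=
  [ffun x : basis => psi (upd x k (x k (+) x j))].

Definition Hmx : 'M[C]_2 :=
  (sqrtC 2)^-1 *: \matrix_(r < 2, c < 2) (if (r == 1%N :> nat) && (c == 1%N :> nat) then -1 else 1).
Definition Smx : 'M[C]_2 :=
  \matrix_(r < 2, c < 2) (if r == c then (if r == 1%N :> nat then 'i else 1) else 0).
Definition Xmx : 'M[C]_2 := \matrix_(r < 2, c < 2) (if r == c then 0 else 1).
Definition Zmx : 'M[C]_2 :=
  \matrix_(r < 2, c < 2) (if r == c then (if r == 1%N :> nat then -1 else 1) else 0).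

Definition unitary2 (U : 'M[C]_2) : Prop := U *m (map_mx Num.conj U)^T = 1%:M.

Inductive gate :=
| GH of 'I_n
| GS of 'I_n
| GCNOT of 'I_n & 'I_n
| G1 of 'M[C]_2 & 'I_n.

Definition apply_gate (g : gate) (psi : state) : state :=
  match g with
  | GH j => apply1 Hmx j psi
  | GS j => apply1 Smx j psi
  | GCNOT j k => apply_cnot j k psi
  | G1 U j => apply1 U j psi
  end.

Definition gate_ok (g : gate) : Prop :=
  match g with
  | GCNOT j k => j <> k
  | G1 U _ => unitary2 U
  | _ => True
  end.

Definition is_nonclifford (g : gate) : bool := if g is G1 _ _ then true else false.

Fixpoint all_ok (c : seq gate) : Prop :=
  if c is g :: c' then gate_ok g /\ all_ok c' else True.

Definition t_doped (t : nat) (c : seq gate) : Prop :=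
  all_ok c /\ (count is_nonclifford c <= t)%N.

Definition run (c : seq gate) : state := foldl (fun psi g => apply_gate g psi) ket0 c.

(* F_2^{2n}: x = (a, b), a = first n coordinates, b = last n coordinates *)
Notation F2n := 'rV['F_2]_(n + n).
Definition xa (x : F2n) (k : 'I_n) : bool := x 0 (lshift n k) != 0.
Definition xb (x : F2n) (k : 'I_n) : bool := x 0 (rshift n k) != 0.

(* a . b over the integers *)
Definition adotb (x : F2n) : nat := \sum_(k < n) (xa x k && xb x k).

Definition Xpow (a : bool) : 'M[C]_2 := if a then Xmx else 1%:M.
Definition Zpow (b : bool) : 'M[C]_2 := if b then Zmx else 1%:M.

(* W_x = i^{a.b} X^{a_1}Z^{b_1} (x) ... (x) X^{a_n}Z^{b_n}, as an operator on states *)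
Definition weyl (x : F2n) (psi : state) : state :=
  let P := foldr (fun k phi => apply1 (Xpow (xa x k) *m Zpow (xb x k)) k phi)
                 psi (enum 'I_n) in
  [ffun y : basis => 'i ^+ adotb x * P y].

Definition Weyl (psi : state) : {set F2n} :=
  [set x : F2n | (weyl x psi == psi) || (weyl x psi == [ffun y : basis => - psi y])].

Definition stabdim (psi : state) : nat := \dim <<enum (Weyl psi)>>%VS.

End QC.

From mathcomp Require Import all_boot all_order all_algebra.
From mathcomp Require Import ring.
Set Implicit Arguments. Unset Strict Implicit. Unset Printing Implicit Defensive.
Import GRing.Theory Num.Theory.
Local Open Scope ring_scope.

(* The Weyl operators fixing |0^n> up to sign include the n-dimensional subspace
   {x | a = 0}.  A Clifford gate G satisfies W_{xM} G = +-G W_x for an invertible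
   matrix M over F_2 (a product of transvections), so it carries a subspace of
   Weyl(psi) isomorphically into Weyl(G psi).  An arbitrary single-qubit gate on
   qubit j commutes with every W_x with a_j = b_j = 0, and these form a subspace
   of codimension at most 2; hence every non-Clifford gate costs at most two
   dimensions. *)

Lemma F2_neq0_add (u v : 'F_2) : (u + v != 0) = (u != 0) (+) (v != 0).
Proof. by case: u => [[|[|//]] ?]; case: v => [[|[|//]] ?]. Qed.

Lemma dim_le_cap_lker (K : fieldType) (aT rT : vectType K) (f : 'Hom(aT, rT)) (V : {vspace aT}) :
  (\dim V <= \dim (V :&: lker f) + \dim {:rT})%N.
Proof. by rewrite -[X in (X <= _)%N](limg_ker_dim f V) leq_add2l dimvS ?subvf. Qed.

Section PhaseSpace.
Variable n : nat.
Local Notation F2n := 'rV['F_2]_(n + n).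

Definition transvection (p q : 'I_(n + n)) : 'M['F_2]_(n + n) := 1%:M + delta_mx p q.

Lemma transvection_coord (x : F2n) p q i :
  ((x *m transvection p q) 0 i != 0) = (x 0 i != 0) (+) ((i == q) && (x 0 p != 0)).
Proof.
rewrite mulmxDr mulmx1 mxE F2_neq0_add; congr (_ (+) _).
rewrite mxE (bigD1 p) //= big1 => [|k /negbTE kp]; last by rewrite mxE kp mulr0.
by rewrite mxE eqxx addr0 /=; case: (i == q); rewrite ?mulr1 ?mulr0 ?eqxx.
Qed.

Lemma transvection_unit p q : p != q -> transvection p q \in unitmx.
Proof.
move=> pq; have [] // := @mulmx1_unit _ _ (transvection p q) (transvection p q).
rewrite /transvection mulmxDl !mulmxDr !mulmx1 mul1mx mul_delta_mx_0 1?eq_sym //.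
have dd : delta_mx p q + delta_mx p q = 0 :> 'M['F_2]_(n + n).
  by apply/matrixP => a b; rewrite !mxE addrr_pchar2 // pchar_Fp.
by rewrite addr0 -addrA dd addr0.
Qed.

(* Three transvections compose to the swap (a_j, b_j) |-> (b_j, a_j). *)
Definition sympH (j : 'I_n) : 'M['F_2]_(n + n) :=
  transvection (lshift n j) (rshift n j) *m transvection (rshift n j) (lshift n j)
  *m transvection (lshift n j) (rshift n j).
Definition sympS (j : 'I_n) : 'M['F_2]_(n + n) := transvection (lshift n j) (rshift n j).
Definition sympCNOT (j k : 'I_n) : 'M['F_2]_(n + n) :=
  transvection (lshift n j) (lshift n k) *m transvection (rshift n k) (rshift n j).

Lemma sympH_unit j : sympH j \in unitmx.
Proof. by rewrite !unitmx_mul !transvection_unit // eq_shift. Qed.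
Lemma sympS_unit j : sympS j \in unitmx.
Proof. by rewrite transvection_unit // eq_shift. Qed.
Lemma sympCNOT_unit j k : j != k -> sympCNOT j k \in unitmx.
Proof. by move=> jk; rewrite unitmx_mul !transvection_unit // eq_shift // eq_sym. Qed.

Lemma xa_sympH j x k : xa (x *m sympH j) k = if k == j then xb x j else xa x k.
Proof.
rewrite /xa /xb /sympH !mulmxA !transvection_coord !eq_shift /=.
by case: (k =P j) => [->|]; rewrite ?eqxx ?addbF //; case: (_ != 0); case: (_ != 0).
Qed.
Lemma xb_sympH j x k : xb (x *m sympH j) k = if k == j then xa x j else xb x k.
Proof.
rewrite /xa /xb /sympH !mulmxA !transvection_coord !eq_shift /=.
by case: (k =P j) => [->|]; rewrite ?eqxx ?addbF //; case: (_ != 0); case: (_ != 0).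
Qed.
Lemma xa_sympS j x k : xa (x *m sympS j) k = xa x k.
Proof. by rewrite /xa transvection_coord eq_shift addbF. Qed.
Lemma xb_sympS j x k : xb (x *m sympS j) k = xb x k (+) ((k == j) && xa x j).
Proof. by rewrite /xa /xb transvection_coord eq_shift. Qed.
Lemma xa_sympCNOT j k x i : xa (x *m sympCNOT j k) i = xa x i (+) ((i == k) && xa x j).
Proof. by rewrite /xa /sympCNOT mulmxA !transvection_coord !eq_shift addbF. Qed.
Lemma xb_sympCNOT j k x i : xb (x *m sympCNOT j k) i = xb x i (+) ((i == j) && xb x k).
Proof. by rewrite /xb /sympCNOT mulmxA !transvection_coord !eq_shift /= !addbF. Qed.

Definition coord_proj m (g : 'I_m -> 'I_(n + n)) : 'Hom(F2n, 'rV['F_2]_m) :=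
  linfun (mulmxr (colsub g 1%:M)).

Lemma coord_proj_ker m (g : 'I_m -> 'I_(n + n)) x k :
  x \in lker (coord_proj g) -> x 0 (g k) = 0.
Proof.
by rewrite memv_ker lfunE /= mulmx_colsub mulmx1 => /eqP/matrixP/(_ 0 k); rewrite !mxE.
Qed.

Lemma dim_coord_proj_ker m (g : 'I_m -> 'I_(n + n)) (V : {vspace F2n}) :
  (\dim V <= \dim (V :&: lker (coord_proj g)) + m)%N.
Proof. by have := dim_le_cap_lker (coord_proj g) V; rewrite dimvf dim_matrix mul1r. Qed.

End PhaseSpace.

Section WeylOperators.
Variable C : numClosedFieldType.
Variable n : nat.
Local Notation basis := {ffun 'I_n -> bool}.
Local Notation state := {ffun basis -> C}.
Local Notation F2n := 'rV['F_2]_(n + n).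

Lemma upd_at (w : basis) j c : upd w j c j = c.
Proof. by rewrite ffunE eqxx. Qed.

Lemma upd_off (w : basis) j c k : k != j -> upd w j c k = w k.
Proof. by rewrite ffunE => /negbTE ->. Qed.

Lemma upd_upd (w : basis) j c c' : upd (upd w j c) j c' = upd w j c'.
Proof. by apply/ffunP => k; rewrite !ffunE; case: eqP. Qed.

Lemma upd_id (y : basis) j : upd y j (y j) = y.
Proof. by apply/ffunP => k; rewrite ffunE; case: eqP => [->|]. Qed.

Definition flip (y : basis) (a : 'I_n -> bool) : basis := [ffun k => y k (+) a k].

Lemma flip_upd (y : basis) a j c : flip (upd y j c) a = upd (flip y a) j (c (+) a j).
Proof. by apply/ffunP => k; rewrite !ffunE; case: eqP => [->|]. Qed.

Definition sign_state (s : bool) (psi : state) : state := [ffun y => (-1) ^+ s * psi y].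

Lemma sign_stateA s s' (psi : state) :
  sign_state s (sign_state s' psi) = sign_state (s (+) s') psi.
Proof. by apply/ffunP => y; rewrite !ffunE signr_addb mulrA. Qed.

Lemma XZ_entry (a b r c : bool) :
  (Xpow C a *m Zpow C b) (b2o r) (b2o c) = if c == r (+) a then (-1) ^+ (b && c) else 0.
Proof.
by case: a; case: b; case: r; case: c;
  rewrite /Xpow /Zpow /Xmx /Zmx /b2o ?mul1mx ?mulmx1 !mxE ?big_ord_recl ?big_ord0 /= ?mxE /=;
  rewrite ?mulr0 ?mul0r ?mulr1 ?mul1r ?addr0 ?add0r.
Qed.

Lemma apply1_XZ a b k (phi : state) y :
  apply1 (Xpow C a *m Zpow C b) k phi y = (-1) ^+ (b && (y k (+) a)) * phi (upd y k (y k (+) a)).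
Proof.
rewrite ffunE (bigD1 (y k (+) a)) //= XZ_entry eqxx big1 ?addr0 // => c /negbTE ca.
by rewrite XZ_entry ca mul0r.
Qed.

Lemma apply1_H j (psi : state) y :
  apply1 (Hmx C) j psi y = (sqrtC 2)^-1 * ((-1) ^+ y j * psi (upd y j true) + psi (upd y j false)).
Proof. by rewrite ffunE big_bool /Hmx !mxE; case: (y j) => /=; ring. Qed.

Lemma apply1_S j (psi : state) y : apply1 (Smx C) j psi y = 'i ^+ y j * psi y.
Proof.
rewrite ffunE big_bool /Smx !mxE -[in RHS](upd_id y j).
by case: (y j); rewrite /= ?mul0r ?mulr0 ?addr0 ?add0r upd_at ?expr1 ?expr0.
Qed.

Lemma apply_cnotE j k (psi : state) y : apply_cnot j k psi y = psi (upd y k (y k (+) y j)).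
Proof. by rewrite ffunE. Qed.

Lemma apply1_sign_state U j s (psi : state) :
  apply1 U j (sign_state s psi) = sign_state s (apply1 U j psi).
Proof.
apply/ffunP => y; rewrite !ffunE mulr_sumr; apply: eq_bigr => c _.
by rewrite ffunE mulrCA.
Qed.

Lemma apply_cnot_sign_state j k s (psi : state) :
  apply_cnot j k (sign_state s psi) = sign_state s (apply_cnot j k psi).
Proof. by apply/ffunP => y; rewrite !ffunE. Qed.

(* On one qubit, [i^(ab) X^a Z^b] sends the amplitude at [y (+) a] to the
   amplitude at [y], multiplied by [pauli_phase a b y]. *)
Definition pauli_phase (a b y : bool) : C := 'i ^+ (a && b) * (-1) ^+ (b && (y (+) a)).

Definition weyl_phase (x : F2n) (y : basis) : C := \prod_k pauli_phase (xa x k) (xb x k) (y k).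

Lemma foldr_apply1_XZ x (psi : state) (s : seq 'I_n) y : uniq s ->
  foldr (fun k phi => apply1 (Xpow C (xa x k) *m Zpow C (xb x k)) k phi) psi s y
  = (\prod_(k <- s) (-1) ^+ (xb x k && (y k (+) xa x k))) * psi [ffun k => y k (+) (xa x k && (k \in s))].
Proof.
elim: s y => [|k s IH] y /=.
  by move=> _; rewrite big_nil mul1r; congr (psi _); apply/ffunP => i; rewrite ffunE andbF addbF.
case/andP => ks us; rewrite apply1_XZ IH // big_cons mulrA; congr (_ * _ * psi _).
  apply: eq_big_seq => i iS; rewrite upd_off //.
  by apply: contraNneq ks => <-.
apply/ffunP => i; rewrite !ffunE /upd inE; case: (eqVneq i k) => [->|//].
by rewrite (negbTE ks) andbF addbF andbT.
Qed.

Lemma weylE x (psi : state) y : weyl x psi y = weyl_phase x y * psi (flip y (xa x)).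
Proof.
rewrite /weyl ffunE foldr_apply1_XZ ?enum_uniq // big_enum /= mulrA /adotb -prodrXr -big_split /=.
by congr (_ * psi _); apply/ffunP => k; rewrite !ffunE mem_enum andbT.
Qed.

Lemma WeylP x (psi : state) : reflect (exists s, weyl x psi = sign_state s psi) (x \in Weyl psi).
Proof.
have sign_stateE s : sign_state s psi = if s then [ffun y => - psi y] else psi.
  by apply/ffunP => y; case: s; rewrite !ffunE ?mulN1r ?mul1r.
rewrite inE; apply: (iffP orP) => [[] /eqP ->|[s ->]].
- by exists false; rewrite sign_stateE.
- by exists true; rewrite sign_stateE.
- by rewrite sign_stateE; case: s; [right | left].
Qed.

Lemma weyl_phase_local (S : {set 'I_n}) x x' (y y' : basis) :
  (forall k, k \notin S -> [/\ xa x' k = xa x k, xb x' k = xb x k & y' k = y k]) ->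
  weyl_phase x' y' = \prod_(k in S) pauli_phase (xa x' k) (xb x' k) (y' k)
                     * \prod_(k | k \notin S) pauli_phase (xa x k) (xb x k) (y k).
Proof.
move=> off; rewrite /weyl_phase (bigID (mem S)) /=; congr (_ * _).
by apply: eq_bigr => k /off [-> -> ->].
Qed.

Lemma weyl_phase_local1 j x x' (y y' : basis) :
  (forall k, k != j -> [/\ xa x' k = xa x k, xb x' k = xb x k & y' k = y k]) ->
  weyl_phase x' y' = pauli_phase (xa x' j) (xb x' j) (y' j)
                     * \prod_(k | k != j) pauli_phase (xa x k) (xb x k) (y k).
Proof.
move=> off; rewrite (weyl_phase_local (S := [set j]) (x := x) (y := y)) => [|k].
  by rewrite big_set1; congr (_ * _); apply: eq_bigl => k; rewrite in_set1.
by rewrite in_set1; apply: off.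
Qed.

Lemma weyl_phase_local2 j k x x' (y y' : basis) : j != k ->
  (forall i, i != j -> i != k -> [/\ xa x' i = xa x i, xb x' i = xb x i & y' i = y i]) ->
  weyl_phase x' y' = pauli_phase (xa x' j) (xb x' j) (y' j) * pauli_phase (xa x' k) (xb x' k) (y' k)
                     * \prod_(i | (i != j) && (i != k)) pauli_phase (xa x i) (xb x i) (y i).
Proof.
move=> jk off; rewrite (weyl_phase_local (S := [set j; k]) (x := x) (y := y)) => [|i].
  rewrite big_setU1 ?big_set1 ?in_set1 //= mulrA; congr (_ * _).
  by apply: eq_bigl => i; rewrite !inE negb_or.
by rewrite !inE negb_or => /andP[]; apply: off.
Qed.

Lemma weyl_sympH j x (psi : state) :
  weyl (x *m sympH j) (apply1 (Hmx C) j psi)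
  = sign_state (xa x j && xb x j) (apply1 (Hmx C) j (weyl x psi)).
Proof.
apply/ffunP => y; rewrite weylE apply1_H [in RHS]ffunE apply1_H !weylE.
pose R := \prod_(k | k != j) pauli_phase (xa x k) (xb x k) (y k).
have lhs_phase : weyl_phase (x *m sympH j) y = pauli_phase (xb x j) (xa x j) (y j) * R.
  rewrite (weyl_phase_local1 (j := j) (x := x) (y := y)) ?xa_sympH ?xb_sympH ?eqxx // => k /negbTE kj.
  by rewrite xa_sympH xb_sympH kj.
have rhs_phase c : weyl_phase x (upd y j c) = pauli_phase (xa x j) (xb x j) c * R.
  by rewrite (weyl_phase_local1 (j := j) (x := x) (y := y)) ?upd_at // => k kj; rewrite upd_off.
have -> : flip y (xa (x *m sympH j)) = upd (flip y (xa x)) j (y j (+) xb x j).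
  by apply/ffunP => k; rewrite !ffunE xa_sympH; case: eqP => [->|].
rewrite lhs_phase !rhs_phase !flip_upd !upd_upd !upd_at.
pose F c := psi (upd (flip y (xa x)) j c).
rewrite -/(F true) -/(F false) -/(F (true (+) xa x j)) -/(F (false (+) xa x j)).
clearbody F R; clear lhs_phase rhs_phase.
by case: (xa x j); case: (xb x j); case: (y j); rewrite /pauli_phase /=; ring.
Qed.

Lemma weyl_sympS j x (psi : state) :
  weyl (x *m sympS j) (apply1 (Smx C) j psi)
  = sign_state (xa x j && xb x j) (apply1 (Smx C) j (weyl x psi)).
Proof.
apply/ffunP => y; rewrite weylE apply1_S [in RHS]ffunE apply1_S weylE.
have -> : flip y (xa (x *m sympS j)) = flip y (xa x).
  by apply/ffunP => k; rewrite !ffunE xa_sympS.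
rewrite (weyl_phase_local1 (j := j) (x := x) (y := y) (x' := x *m sympS j)) => [|k /negbTE kj];
  last by rewrite xa_sympS xb_sympS kj addbF.
rewrite (weyl_phase_local1 (j := j) (x := x) (y := y) (x' := x) (y' := y)) //.
rewrite ffunE xa_sympS xb_sympS eqxx andTb.
move: (\prod_(k | _) _) (psi _) => R P.
by case: (xa x j); case: (xb x j); case: (y j); rewrite /pauli_phase /=; ring: (@sqrCi C).
Qed.

Lemma weyl_sympCNOT j k x (psi : state) : j != k ->
  weyl (x *m sympCNOT j k) (apply_cnot j k psi)
  = sign_state (xa x j && xb x k && ~~ (xb x j (+) xa x k)) (apply_cnot j k (weyl x psi)).
Proof.
move=> jk; have kj : k != j by rewrite eq_sym.
apply/ffunP => y; rewrite weylE apply_cnotE [in RHS]ffunE apply_cnotE weylE.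
have -> : upd (flip y (xa (x *m sympCNOT j k))) k
            (flip y (xa (x *m sympCNOT j k)) k (+) flip y (xa (x *m sympCNOT j k)) j)
          = flip (upd y k (y k (+) y j)) (xa x).
  apply/ffunP => i; rewrite !ffunE !xa_sympCNOT eqxx (negbTE jk) /= addbF.
  by case: eqP => [->|]; rewrite ?eqxx ?addbF //; case: (xa x j); case: (xa x k); case: (y j); case: (y k).
rewrite (weyl_phase_local2 (x := x) (y := y) (x' := x *m sympCNOT j k) jk) => [|i /negbTE ij /negbTE ik];
  last by rewrite xa_sympCNOT xb_sympCNOT ij ik !addbF.
rewrite (weyl_phase_local2 (x := x) (y := y) (x' := x) (y' := upd y k (y k (+) y j)) jk) => [|i ij ik];
  last by rewrite upd_off.
rewrite !upd_at upd_off // !xa_sympCNOT !xb_sympCNOT !eqxx (negbTE jk) (negbTE kj) /= !addbF.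
move: (\prod_(i | _) _) (psi _) => R P.
by case: (xa x j); case: (xa x k); case: (xb x j); case: (xb x k); case: (y j); case: (y k);
  rewrite /pauli_phase /=; ring: (@sqrCi C).
Qed.

Lemma weyl_apply1_local U j x (psi : state) : xa x j = false -> xb x j = false ->
  weyl x (apply1 U j psi) = apply1 U j (weyl x psi).
Proof.
move=> aj bj; apply/ffunP => y; rewrite weylE ffunE [in RHS]ffunE mulr_sumr.
apply: eq_bigr => c _; rewrite weylE flip_upd aj addbF ffunE aj addbF mulrCA; congr (_ * (_ * _)).
rewrite (weyl_phase_local1 (j := j) (x := x) (y := y) (x' := x) (y' := upd y j c)) => [|k kj];
  last by rewrite upd_off.
by rewrite (weyl_phase_local1 (j := j) (x := x) (y := y) (x' := x) (y' := y)) // aj bj.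
Qed.

Definition clifford_covariant (g : state -> state) (M : 'M['F_2]_(n + n)) : Prop :=
  (forall s phi, g (sign_state s phi) = sign_state s (g phi)) /\
  (forall x, exists s, forall phi, weyl (x *m M) (g phi) = sign_state s (g (weyl x phi))).

Lemma Weyl_clifford_image g M (psi : state) (V : {vspace F2n}) :
  clifford_covariant g M -> M \in unitmx -> {subset V <= Weyl psi} ->
  exists2 W : {vspace F2n}, {subset W <= Weyl (g psi)} & \dim W = \dim V.
Proof.
move=> [g_sign g_weyl] Munit VW; pose f : 'Hom(F2n, F2n) := linfun (mulmxr M).
exists (f @: V)%VS => [_ /memv_imgP [x /VW /WeylP [s0 xs0] ->]|].
  have [s gx] := g_weyl x; apply/WeylP; exists (s (+) s0).
  by rewrite lfunE /= gx xs0 g_sign sign_stateA.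
apply: limg_dim_eq; have /eqP -> : lker f == 0%VS.
  by apply/lker0P => x y; rewrite !lfunE /= => /(congr1 (mulmxr (invmx M))); rewrite /= !mulmxK.
exact: capv0.
Qed.

Lemma clifford_covariant_H j : clifford_covariant (apply1 (Hmx C) j) (sympH j).
Proof. by split=> [|x]; [exact: apply1_sign_state | exists (xa x j && xb x j); exact: weyl_sympH]. Qed.

Lemma clifford_covariant_S j : clifford_covariant (apply1 (Smx C) j) (sympS j).
Proof. by split=> [|x]; [exact: apply1_sign_state | exists (xa x j && xb x j); exact: weyl_sympS]. Qed.

Lemma clifford_covariant_CNOT j k : j != k -> clifford_covariant (apply_cnot j k) (sympCNOT j k).
Proof.
move=> jk; split=> [|x]; first exact: apply_cnot_sign_state.
by exists (xa x j && xb x k && ~~ (xb x j (+) xa x k)) => phi; apply: weyl_sympCNOT.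
Qed.

Lemma Weyl_apply1 U j (psi : state) (V : {vspace F2n}) : {subset V <= Weyl psi} ->
  exists2 W : {vspace F2n}, {subset W <= Weyl (apply1 U j psi)} & (\dim V <= \dim W + 2)%N.
Proof.
move=> VW; pose qubit (i : 'I_2) := if val i == 0%N then lshift n j else rshift n j.
exists (V :&: lker (coord_proj qubit))%VS; last exact: dim_coord_proj_ker.
move=> x; rewrite memv_cap => /andP [/VW /WeylP [s xs] xker].
have aj : xa x j = false by rewrite /xa (coord_proj_ker ord0 xker) eqxx.
have bj : xb x j = false by rewrite /xb (coord_proj_ker ord_max xker) eqxx.
by apply/WeylP; exists s; rewrite weyl_apply1_local // xs apply1_sign_state.
Qed.

Lemma Weyl_ket0 : exists2 V : {vspace F2n}, {subset V <= Weyl (ket0 C n)} & (n <= \dim V)%N.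
Proof.
exists (lker (coord_proj (lshift n))) => [x xker|]; last first.
  by have := dim_coord_proj_ker (lshift n) fullv; rewrite capfv dimvf dim_matrix mul1r leq_add2r.
have a0 k : xa x k = false by rewrite /xa (coord_proj_ker k xker) eqxx.
apply/WeylP; exists false; apply/ffunP => y; rewrite weylE !ffunE mul1r.
have -> : flip y (xa x) = y by apply/ffunP => k; rewrite ffunE a0 addbF.
case: eqP => [->|]; last by rewrite mulr0.
by rewrite mulr1 /weyl_phase big1 // => k _; rewrite ffunE a0 /pauli_phase andbF mulr1.
Qed.

Lemma Weyl_apply_gate (g : gate C n) (psi : state) (V : {vspace F2n}) :
  gate_ok g -> {subset V <= Weyl psi} ->
  exists2 W : {vspace F2n}, {subset W <= Weyl (apply_gate g psi)}
                          & (\dim V <= \dim W + 2 * is_nonclifford g)%N.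
Proof.
case: g => [j|j|j k|U j] /= g_ok VW; last exact: Weyl_apply1.
- have [W WW dimW] := Weyl_clifford_image (clifford_covariant_H j) (sympH_unit j) VW.
  by exists W; rewrite // dimW addn0.
- have [W WW dimW] := Weyl_clifford_image (clifford_covariant_S j) (sympS_unit j) VW.
  by exists W; rewrite // dimW addn0.
- have jk : j != k by apply/eqP.
  have [W WW dimW] := Weyl_clifford_image (clifford_covariant_CNOT jk) (sympCNOT_unit jk) VW.
  by exists W; rewrite // dimW addn0.
Qed.

Lemma Weyl_foldl_gates (c : seq (gate C n)) (psi : state) (V : {vspace F2n}) :
  all_ok c -> {subset V <= Weyl psi} ->
  exists2 W : {vspace F2n}, {subset W <= Weyl (foldl (fun phi g => apply_gate g phi) psi c)}
                          & (\dim V <= \dim W + 2 * count (@is_nonclifford C n) c)%N.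
Proof.
elim: c psi V => [|g c IH] psi V /=; first by move=> _ VW; exists V; rewrite ?addn0.
case=> g_ok c_ok VW; have [W1 W1W dimW1] := Weyl_apply_gate g_ok VW.
have [W2 W2W dimW2] := IH _ _ c_ok W1W; exists W2 => //.
by rewrite mulnDr addnA addnAC; apply: leq_trans dimW1 _; rewrite leq_add2r.
Qed.

Lemma dim_le_stabdim (psi : state) (V : {vspace F2n}) :
  {subset V <= Weyl psi} -> (\dim V <= stabdim psi)%N.
Proof. by move=> VW; apply/dimvS/subvP => x /VW xW; rewrite memv_span ?mem_enum. Qed.

End WeylOperators.

Theorem lemma4p2 (C : numClosedFieldType) (n t : nat) (c : seq (gate C n)) :
  t_doped t c -> (n - 2 * t <= stabdim (run c))%N.
Proof.
case=> c_ok count_t; have [V V0 dimV] := Weyl_ket0 C n.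
have [W WW dimW] := Weyl_foldl_gates c_ok V0.
apply: leq_trans (dim_le_stabdim WW); rewrite leq_subLR.
by apply: leq_trans dimV (leq_trans dimW _); rewrite addnC leq_add2r leq_mul2l count_t orbT.
Qed.
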